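(* Let $D$ be a consistent domain, $a$ an action and $(M,s)$ a state such that $\Phi_D(a,(M,s))\neq\emptyset$. Then for each $(M',s')\in(M,s)\otimes\Omega(a,(M,s))$ there exists a state in $\Phi_D(a,(M,s))$ equivalent to $(M',s')$, and conversely for each state in $\Phi_D(a,(M,s))$ there exists an equivalent state in $(M,s)\otimes\Omega(a,(M,s))$ (where $(M,s)\otimes\emptyset=\emptyset$).
   Context: Agents $\mathcal{AG}=\{1,\dots,n\}$, fluents $\mathcal F$, actions. Belief formulae: built from propositional formulae over $\mathcal F$ with $\mathbf B_i$, Boolean connectives, $\mathbf E_\alpha,\mathbf C_\alpha$ ($\emptyset\ne\alpha\subseteq\mathcal{AG}$). Kripke structure $M$: worlds $M[S]$, interpretations $M[\pi](u)\subseteq\mathcal F$, relations $M[i]$; state $(M,s)$. Standard Kripke satisfaction ($\mathbf B_i\varphi$: $\varphi$ holds at all $M[i]$-successors; $\mathbf E_\alpha\varphi$: $\mathbf B_i\varphi$ for all $i\in\alpha$; $\mathbf C_\alpha\varphi$: $\mathbf E^k_\alpha\varphi$ for all $k\ge0$). Two states are equivalent if they satisfy exactly the same belief formulae. Domain $D$: each action has exactly one ''executable $a$ if $\psi$'' and is of exactly one type: world-altering (statements ''$a$ causes $\ell$ if $\varphi$'', $\ell$ a literal), sensing (exactly one statement ''$a$ determines $f$''; the paper assumes a single sensed fluent here) or announcement (exactly one ''$a$ announces $\varphi$'', $\varphi$ fluent formula); plus ''$X$ observes $a$ if $\theta$'' and ''$X$ aware\_of $a$ if $\theta$''. $F_D(a,M,s)$,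 $P_D(a,M,s)$ are the agents whose observes (resp. aware\_of) condition holds in $(M,s)$, $O_D(a,M,s)$ the rest; for world-altering actions $P_D(a,M,s)=\emptyset$. $e_D(a,M,u)$ is the set of $\ell$ with ''$a$ causes $\ell$ if $\varphi$'' in $D$ and $(M,u)\models\varphi$. $D$ consistent: $F_D\cap P_D=\emptyset$ and each $e_D(a,M,u)$ consistent. Standing assumption: announcements are truthful, i.e. when an announcement of $\varphi$ is executable in $(M,s)$, $(M,s)\models\varphi$. $\Phi_D(a,(M,s))$ is $\emptyset$ if $a$ is not executable in $(M,s)$; otherwise a singleton $\{(M',s')\}$: (world-altering) for each $u$ with $a$ executable in $(M,u)$ a fresh world $r(a,u)$ with interpretation $M[\pi](u)$ updated by making the literals of $e_D(a,M,u)$ true; $M'$ = $M$ plus these worlds, plus $(r(a,u),r(a,v))$ for $i\in F_D$ and $(u,v)\in M[i]$, plus $(r(a,u),v)$ for $i\in O_D$ and $(u,v)\in M[i]$; $s'=r(a,s)$. (Sensing of $f$ / announcement of $\varphi$) with precondition $\psi$: take a fresh copy $c(u)$ of each $u$ with $(M,u)\models\psi$, same interpretation; for $i\in F_D$ link $c(u),c(v)$ iff $(u,v)\in M[i]$ and $u,v$ agree on $f$ (resp. on $\varphi$); for $i\in P_D$ link iff $(u,v)\in M[i]$; $M'$ is the union of $M$ and the copy, with additionally $(c(u),v)$ for $i\in O_D$ whenever $(u,v)\in M[i]$; $s'=c(s)$. Update model $\langle\Sigma,R_1,\dots,R_n,pre,sub\rangle$: events $\Sigma$, relations $R_i\subseteq\Sigma\times\Sigma$,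 $pre(e)$ a belief formula, $sub(e)$ a map $p\mapsto\varphi_p$ (identity $p\mapsto p$ when unspecified). $M\otimes\Sigma$: worlds $(u,e)$ with $(M,u)\models pre(e)$; $((u,e),(v,e'))\in(M\otimes\Sigma)[i]$ iff both are worlds, $(u,v)\in M[i]$, $(e,e')\in R_i$; $p$ true at $(u,e)$ iff $(M,u)\models sub(e)(p)$. For $\Gamma\subseteq\Sigma$, $(M,s)\otimes(\Sigma,\Gamma)=\{(M\otimes\Sigma,(s,e))\mid e\in\Gamma,(M,s)\models pre(e)\}$. $\Omega(a,(M,s))=\emptyset$ if $a$ is not executable; otherwise, with $(F,P,O)$ the frame $(F_D,P_D,O_D)(a,M,s)$ and $\psi$ the precondition: (world-altering) $\Sigma=\{\sigma,\epsilon\}$, $R_i=\{(\sigma,\sigma),(\epsilon,\epsilon)\}$ for $i\in F$, $R_i=\{(\sigma,\epsilon),(\epsilon,\epsilon)\}$ for $i\in O$, $pre(\sigma)=\psi$, $pre(\epsilon)=\top$, $sub(\epsilon)$ identity, $sub(\sigma)(p)=\Psi^+(p,a)\vee(p\wedge\neg\Psi^-(p,a))$ where $\Psi^{+}(p,a)$ (resp. $\Psi^-(p,a)$) is the disjunction of the conditions $\varphi$ of all ''$a$ causes $p$ if $\varphi$'' (resp. ''$a$ causes $\neg p$ if $\varphi$''); designated set $\{\sigma\}$. (Sensing $f$ / announcing $\varphi$) $\Sigma=\{\sigma,\tau,\epsilon\}$; $R_i=\{(\sigma,\sigma),(\tau,\tau),(\epsilon,\epsilon)\}$ for $i\in F$,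 that set plus $(\sigma,\tau),(\tau,\sigma)$ for $i\in P$, $\{(\sigma,\epsilon),(\tau,\epsilon),(\epsilon,\epsilon)\}$ for $i\in O$; $pre(\sigma)=\psi\wedge f$ (resp. $\psi\wedge\varphi$), $pre(\tau)=\psi\wedge\neg f$ (resp. $\psi\wedge\neg\varphi$), $pre(\epsilon)=\top$; all substitutions identity; designated set $\{\sigma,\tau\}$ for sensing and $\{\sigma\}$ for announcements. *)

From mathcomp Require Import all_boot.
From Stdlib Require List.

Set Implicit Arguments.
Unset Strict Implicit.
Unset Printing Implicit Defensive.

Inductive fform (F : Type) : Type :=
| FTop | FBot
| FAtom (p : F)
| FNot (phi : fform F)
| FAnd (phi psi : fform F)
| FOr (phi psi : fform F).
Arguments FTop {F}. Arguments FBot {F}.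

Fixpoint fsat (F : Type) (v : F -> Prop) (phi : fform F) : Prop :=
  match phi with
  | FTop => True
  | FBot => False
  | FAtom p => v p
  | FNot a => ~ fsat v a
  | FAnd a b => fsat v a /\ fsat v b
  | FOr a b => fsat v a \/ fsat v b
  end.

Inductive bform (n : nat) (F : Type) : Type :=
| BF (phi : fform F)
| BB (i : 'I_n) (phi : bform n F)
| BNot (phi : bform n F)
| BAnd (phi psi : bform n F)
| BOr (phi psi : bform n F)
| BE (al : {set 'I_n}) (h : al != set0) (phi : bform n F)
| BC (al : {set 'I_n}) (h : al != set0) (phi : bform n F).
Arguments BF {n F} phi.
Arguments BB {n F} i phi.
Arguments BNot {n F} phi.
Arguments BAnd {n F} phi psi.
Arguments BOr {n F} phi psi.
Arguments BE {n F} al h phi.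
Arguments BC {n F} al h phi.

Record kripke (n : nat) (F : Type) := Kripke {
  kW : Type;
  kpi : kW -> F -> Prop;
  kR : 'I_n -> kW -> kW -> Prop
}.
Arguments kW {n F} k.
Arguments kpi {n F} k _ _.
Arguments kR {n F} k _ _ _.

Fixpoint iterE n F (M : kripke n F) (al : {set 'I_n}) (k : nat)
  (P : kW M -> Prop) : kW M -> Prop :=
  match k with
  | 0 => P
  | k'.+1 => fun u => forall i, i \in al -> forall v, kR M i u v -> @iterE n F M al k' P v
  end.
Arguments iterE {n F} M al k P _.

Fixpoint bsat n F (M : kripke n F) (phi : bform n F) {struct phi} : kW M -> Prop :=
  match phi with
  | BF a => fun u => fsat (kpi M u) a
  | BB i a => fun u => forall v, kR M i u v -> @bsat n F M a v
  | BNot a => fun u => ~ @bsat n F M a u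
  | BAnd a b => fun u => @bsat n F M a u /\ @bsat n F M b u
  | BOr a b => fun u => @bsat n F M a u \/ @bsat n F M b u
  | BE al _ a => fun u => forall i, i \in al -> forall v, kR M i u v -> @bsat n F M a v
  | BC al _ a => fun u => forall k, @iterE n F M al k (@bsat n F M a) u
  end.
Arguments bsat {n F} M phi _.

Record state (n : nat) (F : Type) := State { sM : kripke n F; sw : kW sM }.
Arguments sM {n F} s.
Arguments sw {n F} s.

Definition st_equiv n F (s1 s2 : state n F) : Prop :=
  forall phi : bform n F, bsat (sM s1) phi (sw s1) <-> bsat (sM s2) phi (sw s2).

(* literals are pairs (p, b): (p,true) = p, (p,false) = ~p *)
Inductive akind (n : nat) (F : finType) : Type :=
| WorldAlt (causes : seq ((F * bool) * bform n F))   (* "a causes l if phi" *)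
| Sensing (f : F)
| Announce (phi : fform F).
Arguments WorldAlt {n F} causes.
Arguments Sensing {n F} f.
Arguments Announce {n F} phi.

Record domain (n : nat) (F : finType) (Act : Type) := Domain {
  dexec : Act -> bform n F;
  dkind : Act -> akind n F;
  dobs : Act -> seq ({set 'I_n} * bform n F);            (* "X observes a if theta" *)
  daware : Act -> seq ({set 'I_n} * bform n F)           (* "X aware_of a if theta" *)
}.

Section Frames.
Context {n : nat} {F : finType} {Act : Type}.
Local Unset Implicit Arguments.

Definition FD (D : domain n F Act) (a : Act) (M : kripke n F) (s : kW M) (i : 'I_n) : Prop :=
  exists X theta, List.In (X, theta) (dobs D a) /\ i \in X /\ bsat M theta s.

Definition PD (D : domain n F Act) (a : Act) (M : kripke n F) (s : kW M) (i : 'I_n) : Prop :=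
  match dkind D a with
  | WorldAlt _ => False
  | _ => exists X theta, List.In (X, theta) (daware D a) /\ i \in X /\ bsat M theta s
  end.

Definition OD (D : domain n F Act) (a : Act) (M : kripke n F) (s : kW M) (i : 'I_n) : Prop :=
  ~ FD D a M s i /\ ~ PD D a M s i.

Definition eff (D : domain n F Act) (a : Act) (M : kripke n F) (u : kW M) (l : F * bool) : Prop :=
  match dkind D a with
  | WorldAlt cs => exists phi, List.In (l, phi) cs /\ bsat M phi u
  | _ => False
  end.

Definition consistent (D : domain n F Act) : Prop :=
  forall (a : Act) (M : kripke n F),
    (forall s i, ~ (FD D a M s i /\ PD D a M s i)) /\
    (forall u p, ~ (eff D a M u (p, true) /\ eff D a M u (p, false))).

Definition truthful (D : domain n F Act) : Prop :=
  forall a phi, dkind D a = Announce phi ->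
  forall (M : kripke n F) (s : kW M), bsat M (dexec D a) s -> fsat (kpi M s) phi.

Definition exW (D : domain n F Act) (a : Act) (M : kripke n F) :=
  {u : kW M | bsat M (dexec D a) u}.

Definition phi_pi (D : domain n F Act) (a : Act) (M : kripke n F)
  (x : kW M + exW D a M) (p : F) : Prop :=
  match x with
  | inl u => kpi M u p
  | inr u =>
      match dkind D a with
      | WorldAlt _ => eff D a M (proj1_sig u) (p, true) \/
                      (kpi M (proj1_sig u) p /\ ~ eff D a M (proj1_sig u) (p, false))
      | _ => kpi M (proj1_sig u) p
      end
  end.

Definition phi_R (D : domain n F Act) (a : Act) (M : kripke n F) (s : kW M)
  (i : 'I_n) (x y : kW M + exW D a M) : Prop :=
  match x, y with
  | inl u, inl v => kR M i u v
  | inr u, inr v =>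
      match dkind D a with
      | WorldAlt _ => FD D a M s i /\ kR M i (proj1_sig u) (proj1_sig v)
      | Sensing f =>
          (FD D a M s i /\ kR M i (proj1_sig u) (proj1_sig v) /\
             (kpi M (proj1_sig u) f <-> kpi M (proj1_sig v) f)) \/
          (PD D a M s i /\ kR M i (proj1_sig u) (proj1_sig v))
      | Announce phi =>
          (FD D a M s i /\ kR M i (proj1_sig u) (proj1_sig v) /\
             (fsat (kpi M (proj1_sig u)) phi <-> fsat (kpi M (proj1_sig v)) phi)) \/
          (PD D a M s i /\ kR M i (proj1_sig u) (proj1_sig v))
      end
  | inr u, inl v => OD D a M s i /\ kR M i (proj1_sig u) v
  | inl _, inr _ => False
  end.

Definition phi_model (D : domain n F Act) (a : Act) (M : kripke n F) (s : kW M)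
  : kripke n F :=
  @Kripke n F (kW M + exW D a M) (phi_pi D a M) (phi_R D a M s).

(* Phi_D(a,(M,s)) as a set of states (empty or a singleton) *)
Definition Phi (D : domain n F Act) (a : Act) (st : state n F) : state n F -> Prop :=
  fun st' => exists h : bsat (sM st) (dexec D a) (sw st),
    st' = @State n F (phi_model D a (sM st) (sw st))
            (inr (exist _ (sw st) h) : kW (phi_model D a (sM st) (sw st))).

Record umodel := UModel {
  uE : Type;
  uR : 'I_n -> uE -> uE -> Prop;
  upre : uE -> bform n F;
  usub : uE -> F -> bform n F
}.

Definition prodW (M : kripke n F) (U : umodel) :=
  {x : kW M * uE U | bsat M (upre U x.2) x.1}.

Definition prod_kripke (M : kripke n F) (U : umodel) : kripke n F :=
  @Kripke n F (prodW M U)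
    (fun x p => bsat M (usub U (proj1_sig x).2 p) (proj1_sig x).1)
    (fun i x y => kR M i (proj1_sig x).1 (proj1_sig y).1 /\ uR U i (proj1_sig x).2 (proj1_sig y).2).

(* (M,s) (x) (Sigma, Gamma) as a set of states *)
Definition prod_states (M : kripke n F) (s : kW M) (U : umodel) (G : uE U -> Prop)
  : state n F -> Prop :=
  fun st' => exists (e : uE U) (h : bsat M (upre U e) s),
    G e /\ st' = @State n F (prod_kripke M U)
                   (exist (fun x : kW M * uE U => bsat M (upre U x.2) x.1) (s, e) h).

Record pumodel := PUM { pU : umodel; pG : uE pU -> Prop }.

Inductive ev2 := E2sig | E2eps.
Inductive ev3 := E3sig | E3tau | E3eps.

Definition BBot : bform n F := BF FBot.
Definition BTop : bform n F := BF FTop.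

Definition Psi (cs : seq ((F * bool) * bform n F)) (l : F * bool) : bform n F :=
  foldr (fun c acc => if c.1 == l then BOr c.2 acc else acc) BBot cs.

Definition omega_wa (cs : seq ((F * bool) * bform n F)) (Fr Or : 'I_n -> Prop)
  (psi : bform n F) : umodel :=
  @UModel ev2
    (fun i x y => (Fr i /\ x = y) \/ (Or i /\ y = E2eps))
    (fun e => match e with E2sig => psi | E2eps => BTop end)
    (fun e p => match e with
                | E2sig => BOr (Psi cs (p, true))
                               (BAnd (BF (FAtom p)) (BNot (Psi cs (p, false))))
                | E2eps => BF (FAtom p)
                end).

Definition omega_so (Fr Pr Or : 'I_n -> Prop) (psi : bform n F) (chi : fform F)
  : umodel :=
  @UModel ev3
    (fun i x y => (Fr i /\ x = y) \/
                  (Pr i /\ (x = y \/ (x = E3sig /\ y = E3tau) \/ (x = E3tau /\ y = E3sig))) \/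
                  (Or i /\ y = E3eps))
    (fun e => match e with
              | E3sig => BAnd psi (BF chi)
              | E3tau => BAnd psi (BNot (BF chi))
              | E3eps => BTop
              end)
    (fun e p => BF (FAtom p)).

Definition omega_pum (D : domain n F Act) (a : Act) (M : kripke n F) (s : kW M)
  : pumodel :=
  match dkind D a with
  | WorldAlt cs =>
      @PUM (omega_wa cs (FD D a M s) (OD D a M s) (dexec D a))
           (fun e : ev2 => e = E2sig)
  | Sensing f =>
      @PUM (omega_so (FD D a M s) (PD D a M s) (OD D a M s) (dexec D a) (FAtom f))
           (fun e : ev3 => e = E3sig \/ e = E3tau)
  | Announce phi =>
      @PUM (omega_so (FD D a M s) (PD D a M s) (OD D a M s) (dexec D a) phi)
           (fun e : ev3 => e = E3sig)
  end.

(* Omega(a,(M,s)) as a set of pointed update models (empty or a singleton) *)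
Definition Omega (D : domain n F Act) (a : Act) (st : state n F) : pumodel -> Prop :=
  fun p => bsat (sM st) (dexec D a) (sw st) /\ p = omega_pum D a (sM st) (sw st).

(* (M,s) (x) Omega(a,(M,s)), with (M,s) (x) emptyset = emptyset *)
Definition OmegaProd (D : domain n F Act) (a : Act) (st : state n F) : state n F -> Prop :=
  fun st' => exists p, Omega D a st p /\ prod_states (sM st) (sw st) (pU p) (pG p) st'.

End Frames.

From mathcomp Require Import all_boot.
From Stdlib Require Import Classical.

(* Both constructions keep a copy of M (the inl worlds of Phi_D, the epsilon-worlds of the
   product), reached by oblivious agents, next to one new copy of each world where a is
   executable.  Matching these copies gives a bisimulation, and bisimilar worlds satisfy the
   same belief formulae.  For world-altering actions the substitution of sigma evaluates
   exactly e_D(a, M, u); for sensing and announcements the sigma/tau copy of a world records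
   the value of the revealed formula, which is what the links of Phi_D compare. *)

Set Implicit Arguments.
Unset Strict Implicit.
Unset Printing Implicit Defensive.

Section Bisimulation.
Variables (n : nat) (F : Type).

Record bisimulation (M1 M2 : kripke n F) (Z : kW M1 -> kW M2 -> Prop) : Prop :=
  Bisimulation {
    bisim_atoms : forall u v, Z u v -> forall p, kpi M1 u p <-> kpi M2 v p;
    bisim_forth : forall i u v u', Z u v -> kR M1 i u u' ->
      exists2 v', kR M2 i v v' & Z u' v';
    bisim_back : forall i u v v', Z u v -> kR M2 i v v' ->
      exists2 u', kR M1 i u u' & Z u' v'
  }.

Lemma fsat_ext (v1 v2 : F -> Prop) (phi : fform F) :
  (forall p, v1 p <-> v2 p) -> (fsat v1 phi <-> fsat v2 phi).
Proof. by move=> eq_v; elim: phi => /=; tauto. Qed.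

Lemma st_equiv_sym (st1 st2 : state n F) : st_equiv st1 st2 -> st_equiv st2 st1.
Proof. by move=> eq12 phi; rewrite eq12. Qed.

Section Invariance.
Variables (M1 M2 : kripke n F) (Z : kW M1 -> kW M2 -> Prop).
Hypothesis bisimZ : bisimulation Z.

Lemma box_bisim (P1 : kW M1 -> Prop) (P2 : kW M2 -> Prop) i u v :
  (forall u v, Z u v -> (P1 u <-> P2 v)) -> Z u v ->
  (forall u', kR M1 i u u' -> P1 u') <-> (forall v', kR M2 i v v' -> P2 v').
Proof.
move=> eqPQ Zuv; split=> box w Rw.
- by have [u' Ru' Zu'] := bisim_back bisimZ Zuv Rw; apply/(eqPQ _ _ Zu')/box.
- by have [v' Rv' Zv'] := bisim_forth bisimZ Zuv Rw; apply/(eqPQ _ _ Zv')/box.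
Qed.

Lemma everyone_bisim (P1 : kW M1 -> Prop) (P2 : kW M2 -> Prop) (al : {set 'I_n}) u v :
  (forall u v, Z u v -> (P1 u <-> P2 v)) -> Z u v ->
  (forall i, i \in al -> forall u', kR M1 i u u' -> P1 u') <->
  (forall i, i \in al -> forall v', kR M2 i v v' -> P2 v').
Proof.
move=> eqPQ Zuv; split=> box i al_i.
- by apply/(box_bisim i eqPQ Zuv)/box.
- by apply/(box_bisim i eqPQ Zuv)/box.
Qed.

Lemma iterE_bisim (P1 : kW M1 -> Prop) (P2 : kW M2 -> Prop) (al : {set 'I_n}) k u v :
  (forall u v, Z u v -> (P1 u <-> P2 v)) -> Z u v ->
  iterE M1 al k P1 u <-> iterE M2 al k P2 v.
Proof.
move=> eqPQ; elim: k u v => [|k IHk] u v Zuv //=; first exact: eqPQ.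
exact: everyone_bisim.
Qed.

Lemma bsat_bisim (phi : bform n F) u v : Z u v -> bsat M1 phi u <-> bsat M2 phi v.
Proof.
elim: phi u v => [phi|i phi IH|phi IH|phi IH psi IH'|phi IH psi IH'|al _ phi IH|al _ phi IH]
  u v Zuv /=.
- exact: fsat_ext (bisim_atoms bisimZ Zuv).
- exact: box_bisim.
- by rewrite (IH _ _ Zuv).
- by rewrite (IH _ _ Zuv) (IH' _ _ Zuv).
- by rewrite (IH _ _ Zuv) (IH' _ _ Zuv).
- exact: everyone_bisim.
- by split=> sat k; apply/(iterE_bisim al k IH Zuv)/sat.
Qed.

Lemma bisim_st_equiv u v : Z u v -> st_equiv (State u) (State v).
Proof. by move=> Zuv phi; apply: bsat_bisim. Qed.

End Invariance.
End Bisimulation.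

Lemma bsat_Psi (n : nat) (F : finType) (M : kripke n F)
    (cs : seq ((F * bool) * bform n F)) l u :
  bsat M (Psi cs l) u <-> exists phi, List.In (l, phi) cs /\ bsat M phi u.
Proof.
elim: cs => [|[l' phi] cs IH] /=; first by split=> [[]|[? [[]]]].
case: eqP => [->|neq_l] /=; rewrite IH.
- by split=> [[sat|[psi [in_cs sat]]]|[psi [[[<-]|in_cs] sat]]]; eauto.
- by split=> [[psi [in_cs sat]]|[psi [[[/neq_l]|in_cs] sat]]]; eauto.
Qed.

Lemma frame_cases (n : nat) (F : finType) (Act : Type) (D : domain n F Act) a M s i :
  FD D a M s i \/ PD D a M s i \/ OD D a M s i.
Proof.
by have := classic (FD D a M s i); have := classic (PD D a M s i); rewrite /OD; tauto.
Qed.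

Section WorldAltering.
Variables (n : nat) (F : finType) (Act : Type) (D : domain n F Act) (a : Act)
  (M : kripke n F) (s : kW M) (cs : seq ((F * bool) * bform n F)).
Hypothesis kind_a : dkind D a = WorldAlt cs.

Let U := omega_wa cs (FD D a M s) (OD D a M s) (dexec D a).

Definition wa_link (w : kW (prod_kripke M U)) (z : kW (phi_model D a M s)) : Prop :=
  match z with
  | inl v => (sval w).2 = E2eps /\ (sval w).1 = v
  | inr v => (sval w).2 = E2sig /\ (sval w).1 = sval v
  end.

Lemma wa_link_bisim : bisimulation wa_link.
Proof.
split.
- move=> [[u e] h] [v|[v hv]] /= [-> ->] p //.
  by rewrite /phi_pi /eff kind_a /= !bsat_Psi.
- move=> i [[u e] h] [v|[v hv]] [[u' e'] h'] /= [-> ->] [Ruu' Uee'].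
  + by exists (inl u') => //=; split=> //; case: Uee' => [[_ <-]|[]].
  + case: e' h' Uee' => h' Uee'; last by exists (inl u') => //=; case: Uee' => [[_]|[]].
    exists (inr (exist _ u' h')) => //=.
    by rewrite /phi_R kind_a; case: Uee' => [[]|[_]].
- move=> i [[u e] h] [v|[v hv]] [v'|[v' hv']] /= [-> ->] // Rvv'.
  + exists (exist _ (v', E2eps) I) => //=; split=> //.
    by case: (frame_cases D a s i) => [|[]]; [left|rewrite /PD kind_a|right].
  + by case: Rvv' => Ov Rvv'; exists (exist _ (v', E2eps) I) => //=; split; last right.
  + move: Rvv'; rewrite /phi_R kind_a => -[Fi Rvv'].
    by exists (exist (fun x : kW M * ev2 => bsat M (upre U x.2) x.1) (v', E2sig) hv') => //=;
      split; last left.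
Qed.

End WorldAltering.

Definition revealed_formula (n : nat) (F : finType) (k : akind n F) : option (fform F) :=
  match k with
  | WorldAlt _ => None
  | Sensing f => Some (FAtom f)
  | Announce phi => Some phi
  end.

Definition informative (e : ev3) : Prop := e = E3sig \/ e = E3tau.

Section Epistemic.
Variables (n : nat) (F : finType) (Act : Type) (D : domain n F Act) (a : Act)
  (M : kripke n F) (s : kW M) (chi : fform F).
Hypothesis reveals_chi : revealed_formula (dkind D a) = Some chi.

Let U := omega_so (FD D a M s) (PD D a M s) (OD D a M s) (dexec D a) chi.

Lemma phi_pi_revealed x p : phi_pi D a M (inr x) p <-> kpi M (sval x) p.
Proof. by rewrite /phi_pi; case: (dkind D a) reveals_chi. Qed.

Lemma phi_R_revealed i x y :
  phi_R D a M s i (inr x) (inr y) <->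
  (FD D a M s i /\ kR M i (sval x) (sval y) /\
     (fsat (kpi M (sval x)) chi <-> fsat (kpi M (sval y)) chi)) \/
  (PD D a M s i /\ kR M i (sval x) (sval y)).
Proof. by rewrite /phi_R; case: (dkind D a) reveals_chi => // ? [<-]. Qed.

Lemma informative_eq (u u' : kW M) e e' :
  informative e -> informative e' ->
  bsat M (upre U e) u -> bsat M (upre U e') u' ->
  e = e' <-> (fsat (kpi M u) chi <-> fsat (kpi M u') chi).
Proof. by case=> ->; case=> -> /= [_ chi_u] [_ chi_u']; split=> //; tauto. Qed.

Lemma informative_exists u :
  bsat M (dexec D a) u -> exists e (h : bsat M (upre U e) u), informative e.
Proof.
move=> exec_u; case: (classic (fsat (kpi M u) chi)) => chi_u.
- by exists E3sig, (conj exec_u chi_u); left.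
- by exists E3tau, (conj exec_u chi_u); right.
Qed.

Lemma informative_exec e u :
  informative e -> bsat M (upre U e) u -> bsat M (dexec D a) u.
Proof. by case=> -> []. Qed.

Lemma uR_eps_l i e' : uR U i E3eps e' <-> e' = E3eps.
Proof.
case: (frame_cases D a s i) => [|[]] frame_i /=; split; intuition congruence.
Qed.

Lemma uR_eps_r i e : informative e -> (uR U i e E3eps <-> OD D a M s i).
Proof. by case=> -> /=; intuition congruence. Qed.

Lemma uR_informative i e e' : informative e -> informative e' ->
  uR U i e e' <-> (FD D a M s i /\ e = e') \/ PD D a M s i.
Proof. by case=> ->; case=> -> /=; intuition congruence. Qed.

Lemma phi_R_informative i (x y : exW D a M) e e' :
  informative e -> informative e' ->
  bsat M (upre U e) (sval x) -> bsat M (upre U e') (sval y) ->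
  kR M i (sval x) (sval y) /\ uR U i e e' <-> phi_R D a M s i (inr x) (inr y).
Proof.
move=> inf_e inf_e' pre_e pre_e'.
rewrite phi_R_revealed (uR_informative _ inf_e inf_e').
rewrite (informative_eq inf_e inf_e' pre_e pre_e'); tauto.
Qed.

(* Each executable world u has exactly one informative copy in the product, (u, sigma) or
   (u, tau) according to chi at u, and by [informative_eq] "same event" for fully observant
   agents there is "agree on chi" in Phi_D. *)
Definition so_link (w : kW (prod_kripke M U)) (z : kW (phi_model D a M s)) : Prop :=
  match z with
  | inl v => (sval w).2 = E3eps /\ (sval w).1 = v
  | inr v => informative (sval w).2 /\ (sval w).1 = sval v
  end.

Lemma so_link_bisim : bisimulation so_link.
Proof.
split.
- move=> [[u e] h] [v|[v hv]] /= [_ ->] p //=.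
  exact: iff_sym (phi_pi_revealed (exist _ v hv) p).
- move=> i [[u e] h] [v|[v hv]] [[u' e'] h'] /= [inf_e eq_uv] [Ruu' Uee']; subst.
  + by exists (inl u') => //=; split=> //; exact/(uR_eps_l i).
  + have [inf_e'|eps_e'] : informative e' \/ e' = E3eps.
      by case: e' {h' Uee'}; [left; left|left; right|right].
    * pose y := exist _ u' (informative_exec inf_e' h') : exW D a M.
      exists (inr y) => //.
      by apply/(phi_R_informative i (x := exist _ v hv) (y := y) inf_e inf_e' h h').
    * by subst e'; exists (inl u') => //=; split=> //; exact/(uR_eps_r i inf_e).
- move=> i [[u e] h] [v|[v hv]] [v'|[v' hv']] /= [inf_e eq_uv] // Rvv'; subst.
  + by exists (exist _ (v', E3eps) I) => //=; split=> //; exact/(uR_eps_l i).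
  + case: Rvv' => Ov Rvv'.
    by exists (exist _ (v', E3eps) I) => //=; split=> //; exact/(uR_eps_r i inf_e).
  + have [e' [h' inf_e']] := informative_exists hv'.
    exists (exist (fun x : kW M * ev3 => bsat M (upre U x.2) x.1) (v', e') h') => //=.
    by apply/(phi_R_informative i (x := exist _ v hv) (y := exist _ v' hv') inf_e inf_e' h h').
Qed.

End Epistemic.

Section Correspondence.
Variables (n : nat) (F : finType) (Act : Type) (D : domain n F Act) (a : Act)
  (M : kripke n F) (s : kW M) (exec_s : bsat M (dexec D a) s).

Let phi_state := State (inr (exist _ s exec_s) : kW (phi_model D a M s)).
Let omega_states := prod_states M s (pU (omega_pum D a M s)) (pG (omega_pum D a M s)).

Lemma omega_state_equiv_phi st : omega_states st -> st_equiv st phi_state.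
Proof.
rewrite /phi_state /omega_states /omega_pum.
case kind_a: (dkind D a) => [cs|f|chi] /= [e [pre_e [G_e ->]]].
- by apply: (bisim_st_equiv (wa_link_bisim s kind_a)).
- by apply: (bisim_st_equiv (so_link_bisim s (chi := FAtom f) _)); rewrite ?kind_a.
- apply: (bisim_st_equiv (so_link_bisim s (chi := chi) _)); rewrite ?kind_a //.
  by split; first left.
Qed.

Lemma phi_equiv_omega_state :
  truthful D -> exists2 st, omega_states st & st_equiv phi_state st.
Proof.
move=> truthful_D; rewrite /phi_state /omega_states /omega_pum.
case kind_a: (dkind D a) => [cs|f|chi] /=.
- eexists; first by exists E2sig, exec_s.
  by apply/st_equiv_sym/(bisim_st_equiv (wa_link_bisim s kind_a)).
- have [e [pre_e inf_e]] := informative_exists s (FAtom f) exec_s.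
  eexists; first by exists e, pre_e.
  by apply/st_equiv_sym/(bisim_st_equiv (so_link_bisim s (chi := FAtom f) _)); rewrite ?kind_a.
- have chi_s : fsat (kpi M s) chi := truthful_D a chi kind_a M s exec_s.
  eexists; first by exists E3sig, (conj exec_s chi_s).
  apply/st_equiv_sym/(bisim_st_equiv (so_link_bisim s (chi := chi) _)); rewrite ?kind_a //.
  by split; first left.
Qed.

End Correspondence.

Theorem proposition5 (n : nat) (F : finType) (Act : Type)
  (D : domain n F Act) (a : Act) (st : state n F) :
  consistent D -> truthful D ->
  (exists st', Phi D a st st') ->
  (forall st', OmegaProd D a st st' -> exists st'', Phi D a st st'' /\ st_equiv st' st'') /\
  (forall st', Phi D a st st' -> exists st'', OmegaProd D a st st'' /\ st_equiv st' st'').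
Proof.
move=> _ truthful_D [_ [exec_s _]].
case: st exec_s => M s /= exec_s; split.
- move=> st' [_ [[_ ->] omega_st']].
  exists (State (inr (exist _ s exec_s) : kW (phi_model D a M s))).
  by split; [exists exec_s | exact: omega_state_equiv_phi].
- move=> _ [exec_s' ->].
  have [st' omega_st' equiv_st'] := phi_equiv_omega_state exec_s' truthful_D.
  by exists st'; split=> //; exists (omega_pum D a M s).
Qed.
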